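(* Let $n\ge 3$ be an integer and $a,b\in\mathbb{C}$ with $b\neq 0$. Let $A$ be the $n\times n$ tridiagonal matrix with all diagonal entries equal to $a$, all subdiagonal entries $A_{k+1,k}$ ($k=1,\dots,n-1$) equal to $b$, superdiagonal entries $A_{1,2}=A_{n-1,n}=2b$, and all other superdiagonal entries $A_{k,k+1}=b$ ($2\le k\le n-2$); all remaining entries are $0$. Then the eigenvalues of $A$ are $$\lambda_k=a+2b\cos\left(\frac{(k-1)\pi}{n-1}\right),\quad k=1,2,\dots,n,$$ and, writing $\delta_j=\frac{\lambda_j-a}{b}$, for each $j=1,\dots,n$ the vector $(x_{1j},\dots,x_{nj})^T$ with $$x_{kj}=T_{k-1}\left(\tfrac{\delta_j}{2}\right)\ (k=1,\dots,n-1),\qquad x_{nj}=\tfrac12 T_{n-1}\left(\tfrac{\delta_j}{2}\right)$$ is an eigenvector of $A$ corresponding to $\lambda_j$.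
   Context: $T_m(x)$ denotes the Chebyshev polynomial of the first kind: $T_0=1$, $T_1=x$, $T_{m+1}(x)=2xT_m(x)-T_{m-1}(x)$, equivalently $T_m(\cos\theta)=\cos(m\theta)$. *)

From HB Require Import structures.
From mathcomp Require Import all_boot all_order all_algebra.
From mathcomp Require Import complex.
From mathcomp Require Import reals trigo.

Set Implicit Arguments. Unset Strict Implicit. Unset Printing Implicit Defensive.
Import Order.TTheory GRing.Theory Num.Theory.
Local Open Scope ring_scope.

Fixpoint chebT {K : pzRingType} (m : nat) (x : K) : K :=
  match m with
  | 0%N => 1
  | 1%N => x
  | (m'.+1 as m1).+1 => 2 * x * chebT m1 x - chebT m' x
  end.

Definition tridA {K : pzRingType} (n : nat) (a b : K) : 'M[K]_n :=
  \matrix_(i < n, j < n)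
    if (i == j :> nat) then a
    else if (i == j.+1 :> nat) then b
    else if (j == i.+1 :> nat) then
      (if (i == 0%N :> nat) || (i == n.-2 :> nat) then 2 * b else b)
    else 0.

(* lambda_k (0-based k = paper's k-1): a + 2 b cos(k pi / (n-1)). *)
Definition lam (R : realType) (n : nat) (a b : R[i]) (k : nat) : R[i] :=
  a + 2 * b * (real_complex R (cos ((k%:R * pi) / (n.-1)%:R))).

Definition evec (R : realType) (n : nat) (a b : R[i]) (j : nat) : 'cV[R[i]]_n :=
  let d := (lam n a b j - a) / b in
  \col_(k < n) (if (k < n.-1)%N then chebT k (d / 2) else chebT k (d / 2) / 2).

(* For [y = cos t], the vector [(T_0(y), ..., T_(n-2)(y), T_(n-1)(y)/2)] is
   annihilated by [A - (a + 2 b y)] in every row but the last, by the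
   three-term recurrence [T_(k+1) + T_(k-1) = 2 y T_k]; the doubled entries
   [2b] of the first and next-to-last rows account for [T_(-1) = T_1] and for
   the halved last entry.  The last row asks for [T_(n-2)(y) = y T_(n-1)(y)],
   i.e. [sin((n-1) t) = 0], which holds for [t = k pi / (n-1)].  These [n]
   values of [cos t] are distinct, so they are all the eigenvalues and the
   characteristic polynomial splits into the corresponding linear factors. *)

From HB Require Import structures.
From mathcomp Require Import all_boot all_order all_algebra.
From mathcomp Require Import complex.
From mathcomp Require Import reals trigo.
From mathcomp Require Import zify ring.
Import Order.TTheory GRing.Theory Num.Theory.
Local Open Scope ring_scope.

Lemma nat_ind2 (P : nat -> Prop) :
  P 0%N -> P 1%N -> (forall m, P m -> P m.+1 -> P m.+2) -> forall m, P m.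
Proof.
move=> P0 P1 PSS m; suff : P m /\ P m.+1 by case.
by elim: m => [|m [Pm Pm1]]; split => //; apply: PSS.
Qed.

Lemma chebTSS {K : pzRingType} m (x : K) :
  chebT m.+2 x = 2 * x * chebT m.+1 x - chebT m x.
Proof. by []. Qed.

Lemma rmorph_chebT (K L : pzRingType) (f : {rmorphism K -> L}) m (x : K) :
  f (chebT m x) = chebT m (f x).
Proof.
elim/nat_ind2: m => [||m IHm IHm1]; rewrite ?rmorph1 //.
by rewrite !chebTSS rmorphB !rmorphM rmorph_nat IHm IHm1.
Qed.

Section ChebyshevCos.
Variable R : realType.

Lemma cos_natmulS k (t : R) :
  cos (k.+1%:R * t) = cos (k%:R * t) * cos t - sin (k%:R * t) * sin t.
Proof. by rewrite -cosD [k.+1%:R]mulrSr mulrDl mul1r. Qed.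

Lemma cos_natmul_pred k (t : R) :
  cos (k%:R * t) = cos (k.+1%:R * t) * cos t + sin (k.+1%:R * t) * sin t.
Proof. by rewrite -cosB [k.+1%:R]mulrSr mulrDl mul1r addrK. Qed.

Lemma chebT_cos m (t : R) : chebT m (cos t) = cos (m%:R * t).
Proof.
elim/nat_ind2: m => [||m IHm IHm1]; [by rewrite mul0r cos0 | by rewrite mul1r |].
by rewrite chebTSS IHm IHm1 (cos_natmulS m.+1) (cos_natmul_pred m); ring.
Qed.

Lemma chebT_cos_sin_eq0 m (t : R) : sin (m.+2%:R * t) = 0 ->
  chebT m.+1 (cos t) = cos t * chebT m.+2 (cos t).
Proof.
by move=> sin0; rewrite !chebT_cos cos_natmul_pred sin0 mul0r addr0 mulrC.
Qed.

Lemma sin_natpi k : sin (pi *+ k) = 0 :> R.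
Proof. by have := alternatingn (@sinDpi R) k 0; rewrite add0r sin0 mulr0. Qed.

Lemma cos_natpi_div_inj N k1 k2 : (0 < N)%N -> (k1 <= N)%N -> (k2 <= N)%N ->
  cos (k1%:R * pi / N%:R) = cos (k2%:R * pi / N%:R) :> R -> k1 = k2.
Proof.
move=> N_gt0 k1N k2N.
have in_0pi k : (k <= N)%N -> k%:R * pi / N%:R \in `[0, pi : R].
  move=> kN; rewrite in_itv /= divr_ge0 ?mulr_ge0 ?pi_ge0 //=.
  by rewrite ler_pdivrMr ?ltr0n // mulrC ler_wpM2l ?pi_ge0 ?ler_nat.
move=> /(cos_inj (in_0pi _ k1N) (in_0pi _ k2N)).
have N_neq0 : N%:R != 0 :> R by rewrite pnatr_eq0 -lt0n.
move=> /(mulIf (invr_neq0 N_neq0)).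
by move=> /(mulIf (lt0r_neq0 (@pi_gt0 R))) /eqP; rewrite eqr_nat => /eqP.
Qed.

End ChebyshevCos.

Lemma tridA_mul_col (K : pzRingType) n (a b : K) (f : nat -> K) (i : 'I_n) :
  (tridA n a b *m \col_(k < n) f k) i 0 =
  a * f i + (if (0 < i)%N then b * f i.-1 else 0)
  + (if (i.+1 < n)%N then
       (if (i == 0%N :> nat) || (i == n.-2 :> nat) then 2 * b else b) * f i.+1
     else 0).
Proof.
set c := (if _ || _ then _ else _).
rewrite mxE; under eq_bigr => k _ do rewrite !mxE.
rewrite (eq_bigr (fun k : 'I_n => (if k == i :> nat then a * f k else 0)
   + (if k == i.-1 :> nat then (if (0 < i)%N then b * f k else 0) else 0)
   + (if k == i.+1 :> nat then c * f k else 0))); last first.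
  move=> k _; rewrite /c.
  by do ![case: ifP => ? /=]; rewrite ?(addr0, add0r, mul0r) //; exfalso; lia.
rewrite !big_split -!big_mkcond /=.
rewrite (big_ord1_eq _ (fun k => a * f k)) (big_ord1_eq _ (fun k => c * f k)).
rewrite (big_ord1_eq _ (fun k => if (0 < i)%N then b * f k else 0)) ltn_ord.
by rewrite (leq_ltn_trans (leq_pred i) (ltn_ord i)).
Qed.

Definition chebT_entry {K : fieldType} n (y : K) (k : nat) : K :=
  if (k < n.-1)%N then chebT k y else chebT k y / 2.

Definition chebT_col {K : fieldType} n (y : K) : 'cV[K]_n :=
  \col_(k < n) chebT_entry n y k.

Lemma chebT_col_neq0 (K : fieldType) n (y : K) : (1 < n)%N -> chebT_col n y != 0.
Proof.
case: n => [|[|n]] // _; apply/eqP => /matrixP /(_ ord0 ord0).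
by rewrite !mxE /chebT_entry /=; apply/eqP; rewrite oner_eq0.
Qed.

Lemma tridA_chebT_col (K : fieldType) m (a b y : K) : (2 : K) != 0 ->
  chebT m.+1 y = y * chebT m.+2 y ->
  tridA m.+3 a b *m chebT_col m.+3 y = (a + 2 * b * y) *: chebT_col m.+3 y.
Proof.
move=> two_neq0 boundary; apply/matrixP => i j; rewrite ord1.
rewrite tridA_mul_col !mxE /chebT_entry.
move: (nat_of_ord i) (ltn_ord i) => {i} -[_|i i_lt]; first by rewrite /=; ring.
rewrite ltn0Sn succnK.
case: (ltngtP i m) => [i_lt_m|m_lt_i|->]; do ![case: ifP => ?]; try (exfalso; lia).
- by rewrite chebTSS; ring.
- have -> : i = m.+1 by lia.
  by rewrite boundary; field.
- by rewrite chebTSS; field.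
Qed.

Lemma char_poly_trmx (K : comNzRingType) n (A : 'M[K]_n) : char_poly A^T = char_poly A.
Proof.
rewrite /char_poly -det_tr; congr (\det _).
by apply/matrixP => i j; rewrite !mxE eq_sym.
Qed.

Lemma eigenvector_root_char (K : fieldType) n (A : 'M[K]_n) (v : 'cV_n) c :
  v != 0 -> A *m v = c *: v -> root (char_poly A) c.
Proof.
move=> v_neq0 Av; rewrite -char_poly_trmx -eigenvalue_root_char.
apply/eigenvalueP; exists v^T; first by rewrite -trmx_mul Av linearZ.
by rewrite -(inj_eq (@trmx_inj _ _ _)) trmxK trmx0.
Qed.

Lemma char_poly_distinct_eigenvalues (K : fieldType) n (A : 'M[K]_n)
    (lambda : 'I_n -> K) (v : 'I_n -> 'cV[K]_n) :
  injective lambda -> (forall k, v k != 0) -> (forall k, A *m v k = lambda k *: v k) ->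
  char_poly A = \prod_(k < n) ('X - (lambda k)%:P).
Proof.
move=> lambda_inj v_neq0 Av.
have := @all_roots_prod_XsubC _ (char_poly A) [seq lambda k | k <- enum 'I_n].
rewrite size_char_poly size_map size_enum_ord => /(_ erefl).
rewrite (monicP (char_poly_monic _)) scale1r big_map big_enum; apply.
  by apply/allP => _ /mapP[k _ ->]; apply: eigenvector_root_char (v_neq0 k) (Av k).
by rewrite uniq_rootsE map_inj_uniq ?enum_uniq.
Qed.

Theorem theorem1 (R : realType) (n : nat) (a b : R[i]) (hn : (3 <= n)%N) (hb : b != 0) :
  char_poly (tridA n a b) = \prod_(k < n) ('X - (lam n a b k)%:P)
  /\ (forall j : 'I_n,
        evec n a b j != 0 /\ tridA n a b *m evec n a b j = lam n a b j *: evec n a b j).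
Proof.
case: n hn => [|[|[|m]]] // _.
pose y (j : nat) := real_complex R (cos (j%:R * pi / m.+2%:R)).
have lamE j : lam m.+3 a b j = a + 2 * b * y j by [].
have evecE j : evec m.+3 a b j = chebT_col m.+3 (y j).
  rewrite -[LHS]/(chebT_col m.+3 ((lam m.+3 a b j - a) / b / 2)) lamE.
  by congr chebT_col; field.
have evec_neq0 j : evec m.+3 a b j != 0 by rewrite evecE chebT_col_neq0.
have evec_eigen j : tridA m.+3 a b *m evec m.+3 a b j = lam m.+3 a b j *: evec m.+3 a b j.
  rewrite evecE lamE tridA_chebT_col ?pnatr_eq0 // /y -!rmorph_chebT.
  rewrite chebT_cos_sin_eq0 ?rmorphM // mulrC divfK ?pnatr_eq0 // mulr_natl.
  exact: sin_natpi.
split=> [|j]; last by split.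
apply: char_poly_distinct_eigenvalues evec_neq0 evec_eigen.
have two_b_neq0 : 2 * b != 0 by rewrite mulf_neq0 ?pnatr_eq0.
move=> k1 k2; rewrite !lamE => /addrI /(mulfI two_b_neq0) /complexI.
by move/cos_natpi_div_inj => /(_ isT (ltn_ord k1) (ltn_ord k2)) /val_inj.
Qed.
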